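(* Let $u\in\Lambda$ and $(h,\beta)\in\Gamma(u)$. Then for every $j\in\mathbb N$, $\mathbf K^s_u\le\lfloor\mathfrak F_u(j,h,\beta)\rfloor$ (with $\lfloor+\infty\rfloor=+\infty$). Moreover, if $\mathcal S(u,h)\neq\emptyset$, then $\min_{k\in\mathcal S(u,h)}\mathfrak F_u(k,h,\beta)=\mathfrak F_u(\mathbf K^s_u,h,\beta)$.
   Context: $\Lambda$: real sequences with $\sup_n u_n<+\infty$. $\Delta^s_u=\{k:\max_{0\le j\le k}u_j>\sup_{j>k}u_j\}$, $\mathbf K^s_u=\inf\Delta^s_u$ ($\inf\emptyset=+\infty$). $\Omega([0,1])$: functions $h:\mathbb R\to\mathbb R$ whose restriction to $[0,1]$ is strictly increasing and continuous; $h^{-1}_{[0,1]}$ the inverse of that restriction. $\Gamma(u)=\{(h,\beta)\in\Omega([0,1])\times(0,1):u_k\le h(\beta^k)\ \forall k\}$; $\mathcal S(u,h)=\{k:u_k>h(0)\}$. $\mathfrak F_u(k,h,\beta)=\ln(h^{-1}_{[0,1]}(u_k))/\ln\beta$ if $(h,\beta)\in\Gamma(u)$ and $k\in\mathcal S(u,h)$, and $+\infty$ otherwise. *)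

From HB Require Import structures.
From mathcomp Require Import all_boot all_order all_algebra.
From mathcomp Require Import all_classical all_reals all_analysis.
Set Implicit Arguments. Unset Strict Implicit. Unset Printing Implicit Defensive.
Import Order.TTheory GRing.Theory Num.Theory.
Import numFieldNormedType.Exports.
Local Open Scope classical_set_scope.
Local Open Scope ring_scope.

Section Defs.
Variable R : realType.

Definition Lambda (u : nat -> R) : Prop := exists M : R, forall n, u n <= M.

Definition maxUpTo (u : nat -> R) (k : nat) : R :=
  \big[Num.max/u 0%N]_(j < k.+1) u j.

Definition supAfter (u : nat -> R) (k : nat) : R :=
  sup [set u j | j in [set j : nat | (k < j)%N]].

Definition DeltaS (u : nat -> R) : set nat :=
  [set k | maxUpTo u k > supAfter u k].

(* K^s_u = inf Delta^s_u in N u {+oo}; None stands for +oo (inf of empty set) *)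
Definition KS (u : nat -> R) : option nat :=
  match pselect (exists k, DeltaS u k) with
  | left ex => Some (ex_minn (P := fun k => `[< DeltaS u k >])
                      (let: ex_intro k hk := ex in ex_intro _ k (asboolT hk)))
  | right _ => None
  end.

Definition onat_to_ereal (o : option nat) : \bar R :=
  if o is Some k then (k%:R)%:E else +oo%E.

Definition Omega01 (h : R -> R) : Prop :=
  {within `[0, 1], continuous h} /\
  (forall x y, x \in `[0, 1] -> y \in `[0, 1] -> x < y -> h x < h y).

(* inverse of the restriction of h to [0,1] (junk value 0 off h([0,1])) *)
Definition hinv01 (h : R -> R) (y : R) : R :=
  xget 0 [set x | x \in `[0, 1] /\ h x = y].

Definition Gamma (u : nat -> R) (h : R -> R) (b : R) : Prop :=
  Omega01 h /\ 0 < b < 1 /\ (forall k, u k <= h (b ^+ k)).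

Definition SS (u : nat -> R) (h : R -> R) : set nat := [set k | u k > h 0].

Definition Ffun (u : nat -> R) (k : nat) (h : R -> R) (b : R) : \bar R :=
  if `[< Gamma u h b /\ SS u h k >]
  then (ln (hinv01 h (u k)) / ln b)%:E
  else +oo%E.

(* F_u evaluated at an index in N u {+oo}; the index +oo is not in S(u,h) *)
Definition Ffun_o (u : nat -> R) (k : option nat) (h : R -> R) (b : R) : \bar R :=
  if k is Some k' then Ffun u k' h b else +oo%E.

Definition efloor (x : \bar R) : \bar R :=
  match x with
  | r%:E => ((Num.floor r)%:~R)%:E
  | +oo%E => +oo%E
  | -oo%E => -oo%E
  end.

End Defs.

From HB Require Import structures.
From mathcomp Require Import all_boot all_order all_algebra.
From mathcomp Require Import all_classical all_reals all_analysis.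
Import Order.TTheory GRing.Theory Num.Theory.
Local Open Scope classical_set_scope.
Local Open Scope ring_scope.

Set Implicit Arguments. Unset Strict Implicit.

(* For j in S(u,h), put x := h^-1(u_j), so that x <= beta^j and F_u(j) = ln x / ln beta.
   With m := floor F_u(j) >= j we get beta^(m+1) < x, hence
   sup_{i>m} u_i <= h(beta^(m+1)) < h(x) = u_j <= max_{i<=m} u_i: m lies in Delta^s_u,
   which gives the first claim.  Minimality of K := K^s_u forces u_K to be the largest
   term of u, so K lies in S(u,h) and h^-1(u_K) dominates every h^-1(u_k); as ln beta < 0,
   F_u(K) is then the least value of F_u on S(u,h). *)

Section Suprema.
Variables (R : realType) (u : nat -> R).

Lemma maxUpTo_ge k i : (i <= k)%N -> u i <= maxUpTo u k.
Proof. by rewrite -ltnS => ik; apply: (le_bigmax _ _ (Ordinal ik)). Qed.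

Lemma maxUpTo_le_ub k M : (forall i, (i <= k)%N -> u i <= M) -> maxUpTo u k <= M.
Proof. by move=> uM; apply: bigmax_le => [|i _]; apply: uM; rewrite // -ltnS. Qed.

Lemma supAfter_le_ub k M : (forall i, (k < i)%N -> u i <= M) -> supAfter u k <= M.
Proof.
move=> uM; apply: ge_sup; first by exists (u k.+1), k.+1 => /=.
by move=> _ [i ki <-]; exact: uM.
Qed.

Hypothesis u_bounded : Lambda u.

Lemma le_supAfter k i : (k < i)%N -> u i <= supAfter u k.
Proof.
have [M uM] := u_bounded.
by move=> ki; apply: ub_le_sup; [exists M => _ [n _ <-] | exists i].
Qed.

Lemma supAfter_leS k : supAfter u k <= Num.max (u k.+1) (supAfter u k.+1).
Proof.
apply: supAfter_le_ub => i; rewrite leq_eqVlt le_max => /orP[/eqP<-|ki].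
  by rewrite lexx.
by rewrite le_supAfter ?orbT.
Qed.

Lemma maxUpTo_DeltaS_min K :
  DeltaS u K -> (forall n, DeltaS u n -> (K <= n)%N) -> maxUpTo u K = u K.
Proof.
move=> DK minK; apply/le_anti; rewrite maxUpTo_ge // andbT.
case: K DK minK => [_ _|K DK minK].
  by apply: maxUpTo_le_ub => i; rewrite leqn0 => /eqP->.
(* If u_(K+1) is not the maximum, the maximum is reached at some i <= K,
   and then K itself lies in Delta^s_u. *)
rewrite leNgt; apply/negP => lt_uK.
have le_max_K : maxUpTo u K.+1 <= maxUpTo u K.
  have : maxUpTo u K.+1 <= Num.max (maxUpTo u K) (u K.+1).
    apply: maxUpTo_le_ub => i; rewrite le_max leq_eqVlt ltnS.
    by case/orP=> [/eqP->|/maxUpTo_ge->]; rewrite ?lexx ?orbT.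
  by rewrite le_max (leNgt _ (u _)) lt_uK orbF.
suff /minK : DeltaS u K by rewrite ltnn.
rewrite /DeltaS /= (le_lt_trans (supAfter_leS K)) // gt_max.
by rewrite (lt_le_trans lt_uK) ?(lt_le_trans DK).
Qed.

Lemma DeltaS_min_ge K :
  DeltaS u K -> (forall n, DeltaS u n -> (K <= n)%N) -> forall i, u i <= u K.
Proof.
move=> DK minK i; rewrite -(maxUpTo_DeltaS_min DK minK).
have [iK|Ki] := leqP i K; first exact: maxUpTo_ge.
by rewrite ltW // (le_lt_trans (le_supAfter Ki)).
Qed.

End Suprema.

Lemma KS_min (R : realType) (u : nat -> R) : DeltaS u !=set0 ->
  exists K, [/\ KS u = Some K, DeltaS u K & forall n, DeltaS u n -> (K <= n)%N].
Proof.
move=> exD; rewrite /KS; case: pselect => [ex|//].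
case: ex_minnP => K /asboolP DK minK; exists K; split=> // n Dn.
exact/minK/asboolP.
Qed.

Section Omega01.
Variables (R : realType) (h : R -> R).
Hypothesis hO : Omega01 h.

Lemma Omega01_le : {in `[0, 1] &, {mono h : x y / x <= y}}.
Proof. by case: hO => _ h_homo; apply: le_mono_in => x y; apply: h_homo. Qed.

Lemma Omega01_lt : {in `[0, 1] &, {mono h : x y / x < y}}.
Proof. exact: leW_mono_in Omega01_le. Qed.

Lemma hinv01P y : h 0 <= y <= h 1 ->
  hinv01 h y \in `[0, 1] /\ h (hinv01 h y) = y.
Proof.
move=> y01; case: hO => h_cont _.
have h01 : h 0 <= h 1 by rewrite Omega01_le ?ler01 // in_itv /= lexx ler01.
have [c c01 hc] : exists2 c, c \in `[0, 1] & h c = y.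
  by apply: IVT; rewrite ?ler01 ?min_l ?max_r.
by apply: (@xgetPex _ 0 [set x | x \in `[0, 1] /\ h x = y]); exists c.
Qed.

End Omega01.

Lemma ler_nat_ln_div (R : realType) (b x : R) (n : nat) : 0 < b < 1 -> 0 < x ->
  (n%:R <= ln x / ln b) = (x <= b ^+ n).
Proof.
move=> /andP[b0 b1] x0.
by rewrite ler_ndivlMr ?ln_lt0 ?b0 // mulr_natl -lnXn // ler_ln ?posrE ?exprn_gt0.
Qed.

Section Gamma.
Variables (R : realType) (u : nat -> R) (h : R -> R) (b : R).
Hypothesis uhb : Gamma u h b.

Let hO : Omega01 h. Proof. by case: uhb. Qed.
Let b01 : 0 < b < 1. Proof. by case: uhb => _ []. Qed.
Let u_le_h k : u k <= h (b ^+ k). Proof. by case: uhb => _ []. Qed.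

Let pow_in01 k : b ^+ k \in `[0, 1].
Proof. by case/andP: b01 => b0 b1; rewrite in_itv /= exprn_ge0 ?exprn_ile1 ?ltW. Qed.

Lemma hinv01_SS k : SS u h k -> let x := hinv01 h (u k) in
  [/\ x \in `[0, 1], h x = u k, 0 < x & x <= b ^+ k].
Proof.
move=> hk x; have in01_0 : (0 : R) \in `[0, 1] by rewrite in_itv /= lexx ler01.
have [x01 hx] : x \in `[0, 1] /\ h x = u k.
  apply: hinv01P => //; rewrite ltW //= (le_trans (u_le_h k)) // Omega01_le //.
    by move: (pow_in01 k); rewrite in_itv /= => /andP[].
  by rewrite in_itv /= ler01 lexx.
split=> //; first by rewrite -(Omega01_lt hO) ?hx.
by rewrite -(Omega01_le hO) ?hx.
Qed.

Lemma Ffun_SS k : SS u h k -> Ffun u k h b = (ln (hinv01 h (u k)) / ln b)%:E.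
Proof. by move=> hk; rewrite /Ffun asboolT. Qed.

Lemma supAfter_le_h k : supAfter u k <= h (b ^+ k.+1).
Proof.
apply: supAfter_le_ub => i ki; rewrite (le_trans (u_le_h i)) // Omega01_le //.
by case/andP: b01 => b0 b1; rewrite ler_wiXn2l ?ltW.
Qed.

Lemma efloor_Ffun_DeltaS j : SS u h j ->
  exists2 m : nat, efloor (Ffun u j h b) = (m%:R)%:E & DeltaS u m.
Proof.
move=> hj; have [x01 hx x0 xb] := hinv01_SS hj.
rewrite Ffun_SS //=; set F := ln _ / ln b.
have jF : j%:R <= F by rewrite ler_nat_ln_div.
have: (0 <= Num.floor F)%R by rewrite floor_ge0 (le_trans _ jF).
case Em : (Num.floor F) => [m|] // _; exists m; first by rewrite pmulrn.
have jm : (j <= m)%N by rewrite -lez_nat -Em floor_ge_int.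
have bx : b ^+ m.+1 < hinv01 h (u j).
  by rewrite ltNge -ler_nat_ln_div // -/F pmulrn -floor_ge_int Em lez_nat ltnn.
rewrite /DeltaS /= (le_lt_trans (supAfter_le_h m)) //.
by rewrite (lt_le_trans _ (maxUpTo_ge u jm)) // -hx Omega01_lt.
Qed.

Lemma Ffun_le_SS k K : SS u h k -> SS u h K -> u k <= u K ->
  (Ffun u K h b <= Ffun u k h b)%E.
Proof.
move=> hk hK ukK; rewrite !Ffun_SS // lee_fin.
have [k01 hxk xk0 _] := hinv01_SS hk; have [K01 hxK xK0 _] := hinv01_SS hK.
have lnb : ln b < 0 by apply: ln_lt0.
rewrite ler_ndivrMr // divfK ?lt_eqF // ler_ln ?posrE //.
by rewrite -(Omega01_le hO) ?hxk ?hxK.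
Qed.

End Gamma.

Unset Implicit Arguments.

Theorem mainTheorem6 (R : realType) (u : nat -> R) (h : R -> R) (b : R) :
  Lambda u -> Gamma u h b ->
  (forall j : nat, (onat_to_ereal R (KS u) <= efloor (Ffun u j h b))%E) /\
  (SS u h !=set0 ->
     (exists2 k0, SS u h k0 & Ffun u k0 h b = Ffun_o u (KS u) h b) /\
     (forall k, SS u h k -> (Ffun_o u (KS u) h b <= Ffun u k h b)%E)).
Proof.
move=> u_bounded uhb; split.
  move=> j; have [hj|hj] := pselect (SS u h j); last first.
    by rewrite /Ffun asboolF ?leey // => -[].
  have [m -> Dm] := efloor_Ffun_DeltaS uhb hj.
  have [K [-> _ minK]] := KS_min (ex_intro _ m Dm).
  by rewrite /= lee_fin ler_nat minK.
move=> [j hj]; have [m _ Dm] := efloor_Ffun_DeltaS uhb hj.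
have [K [-> DK minK]] := KS_min (ex_intro _ m Dm).
have uK := DeltaS_min_ge u_bounded DK minK.
have hK : SS u h K by rewrite /SS /= (lt_le_trans hj).
by split; [exists K | move=> k hk; apply: Ffun_le_SS].
Qed.
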